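(* Let $T$ be a triangle and let $\Gamma_{h,T}$ be an open line segment with endpoints on $\partial T$ that divides $T$ into two nonempty open parts $T_h^+$ and $T_h^-$; let $\mathbf{n}_h$ be the unit normal of $\Gamma_{h,T}$ pointing into $T_h^+$ and $\mathbf{t}_h=R_{-\pi/2}\mathbf{n}_h$. For $k=1,2$ consider pairs $(\mathbf{v}^{J_k},q^{J_k})$, piecewise defined by $\mathbf{v}^{J_k}=\mathbf{v}^{J_k,\pm}$, $q^{J_k}=q^{J_k,\pm}$ on $T_h^\pm$, with $\mathbf{v}^{J_k,\pm}\in P_1(T)^2$, $q^{J_k,\pm}\in P_0(T)$, such that $N_{i,T}(\mathbf{v}^{J_k},q^{J_k})=0$ for $i=1,\dots,7$, $[\![\mathbf{v}^{J_k,\pm}]\!]=\mathbf{0}$ on $\Gamma_{h,T}$, $[\![\nabla\cdot\mathbf{v}^{J_k,\pm}]\!]=0$, and $$[\![\sigma(1,\mathbf{v}^{J_1,\pm},q^{J_1,\pm})\mathbf{n}_h]\!]=\mathbf{n}_h,\qquad [\![\sigma(1,\mathbf{v}^{J_2,\pm},q^{J_2,\pm})\mathbf{n}_h]\!]=\mathbf{t}_h.$$ Then such pairs exist, are unique, and are given by $$\mathbf{v}^{J_1}=\mathbf{0},\quad q^{J_1}=z-\pi^0_{h,T}z,\qquad \mathbf{v}^{J_2}=(w-\pi^{CR}_{h,T}w)\mathbf{t}_h,\quad q^{J_2}=0,$$ where $z=-1$ on $T_h^+$, $z=0$ on $T_h^-$, and $w(\mathbf{x})=\operatorname{dist}(\mathbf{x},\Gamma_{h,T})$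 on $T_h^+$, $w=0$ on $T_h^-$.
   Context: $R_{-\pi/2}$ denotes rotation by $90^\circ$ clockwise. $\sigma(\mu,\mathbf{v},q)=2\mu\boldsymbol{\epsilon}(\mathbf{v})-q\mathbb{I}$ with $\boldsymbol{\epsilon}(\mathbf{v})=\frac12(\nabla\mathbf{v}+(\nabla\mathbf{v})^T)$. For polynomials $g^\pm$ (viewed as defined on all of $T$), $[\![g^\pm]\!]=g^+-g^-$. With edges $e_1,e_2,e_3$ of $T$ and $\mathbf{v}=(v_1,v_2)^T$, the degrees of freedom are $N_{i,T}(\mathbf{v},q)=|e_i|^{-1}\int_{e_i}v_1$, $N_{3+i,T}(\mathbf{v},q)=|e_i|^{-1}\int_{e_i}v_2$ ($i=1,2,3$), $N_{7,T}(\mathbf{v},q)=|T|^{-1}\int_T q$. For a function $v$ with well-defined edge integrals, $\pi^{CR}_{h,T}v$ is the unique element of $P_1(T)$ with $\int_{e_i}\pi^{CR}_{h,T}v=\int_{e_i}v$, $i=1,2,3$; $\pi^0_{h,T}q=|T|^{-1}\int_Tq$. *)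

From HB Require Import structures.
From mathcomp Require Import all_boot all_order all_algebra.
From mathcomp Require Import all_classical all_reals all_analysis.
Set Implicit Arguments. Unset Strict Implicit. Unset Printing Implicit Defensive.
Import Order.TTheory GRing.Theory Num.Theory.
Local Open Scope classical_set_scope.
Local Open Scope ring_scope.

Section Defs.
Variable R : realType.

Definition pt := (R * R)%type.
Definition dot (u v : pt) : R := u.1 * v.1 + u.2 * v.2.
Definition cross (u v : pt) : R := u.1 * v.2 - u.2 * v.1.
Definition psub (u v : pt) : pt := (u.1 - v.1, u.2 - v.2).
Definition padd (u v : pt) : pt := (u.1 + v.1, u.2 + v.2).
Definition pscale (s : R) (u : pt) : pt := (s * u.1, s * u.2).

Definition rot_m90 (u : pt) : pt := (u.2, - u.1).

(* P1 scalar polynomials a*x1 + b*x2 + c, coefficient representation ((a,b),c) *)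
Definition P1 := (R * R * R)%type.
Definition ev1 (p : P1) (x : pt) : R := p.1.1 * x.1 + p.1.2 * x.2 + p.2.
Definition P1sub (p r : P1) : P1 := (p.1.1 - r.1.1, p.1.2 - r.1.2, p.2 - r.2).
Definition P1scale (s : R) (p : P1) : P1 := (s * p.1.1, s * p.1.2, s * p.2).
Definition P1zero : P1 := (0, 0, 0).

Definition P1v := (P1 * P1)%type.
Definition evv (v : P1v) (x : pt) : pt := (ev1 v.1 x, ev1 v.2 x).
Definition P1vzero : P1v := (P1zero, P1zero).
Definition P1times_vec (p : P1) (t : pt) : P1v := (P1scale t.1 p, P1scale t.2 p).

Definition dv (v : P1v) (i j : bool) : R :=
  let vi := if i then v.2 else v.1 in if j then vi.1.2 else vi.1.1.
(* indices: false = 1, true = 2 *)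
Definition divv (v : P1v) : R := dv v false false + dv v true true.
Definition eps (v : P1v) (i j : bool) : R := (dv v i j + dv v j i) / 2.
Definition sigma (mu : R) (v : P1v) (q : R) (i j : bool) : R :=
  2 * mu * eps v i j - (if i == j then q else 0).
Definition sigma_n (mu : R) (v : P1v) (q : R) (n : pt) : pt :=
  (sigma mu v q false false * n.1 + sigma mu v q false true * n.2,
   sigma mu v q true false * n.1 + sigma mu v q true true * n.2).

Definition comb3 (a b c : pt) (l1 l2 l3 : R) : pt :=
  (l1 * a.1 + l2 * b.1 + l3 * c.1, l1 * a.2 + l2 * b.2 + l3 * c.2).
Definition tri_closed (a b c : pt) : set pt :=
  [set x | exists l1 l2 l3, [/\ 0 <= l1, 0 <= l2, 0 <= l3, l1 + l2 + l3 = 1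
                                & x = comb3 a b c l1 l2 l3]].
Definition tri_open (a b c : pt) : set pt :=
  [set x | exists l1 l2 l3, [/\ 0 < l1, 0 < l2, 0 < l3, l1 + l2 + l3 = 1
                                & x = comb3 a b c l1 l2 l3]].
Definition edges (a b c : pt) : seq (pt * pt) := [:: (b, c); (c, a); (a, b)].

(* interface Gamma_{h,T} = {x in int T | n.x = d}; T^+ = {n.x > d}, T^- = {n.x < d} *)
Definition Gamma (a b c n : pt) (d : R) : set pt :=
  [set x | tri_open a b c x /\ dot n x = d].
Definition Tplus (a b c n : pt) (d : R) : set pt :=
  [set x | tri_open a b c x /\ d < dot n x].
Definition Tminus (a b c n : pt) (d : R) : set pt :=
  [set x | tri_open a b c x /\ dot n x < d].

Definition pw (X : Type) (n : pt) (d : R) (fp fm : pt -> X) : pt -> X :=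
  fun x => if d < dot n x then fp x else fm x.

(* |e|^{-1} \int_e f  computed through the arc-length parametrization of e=[p,q] *)
Definition edge_mean (f : pt -> R) (e : pt * pt) : R :=
  Rintegral (@lebesgue_measure R) `[0, 1]%classic
    (fun t : R => f (padd e.1 (pscale t (psub e.2 e.1)))).

Definition leb2 := ((@lebesgue_measure R) \x (@lebesgue_measure R))%E.
Definition area (a b c : pt) : R := fine (leb2 (tri_closed a b c)).
Definition cell_mean (a b c : pt) (f : pt -> R) : R :=
  Rintegral leb2 (tri_closed a b c) f / area a b c.

(* degrees of freedom N_{1..7,T} *)
Definition dofs_vanish (a b c : pt) (v : pt -> pt) (q : pt -> R) : Prop :=
  (forall e, e \in edges a b c -> edge_mean (fun x => (v x).1) e = 0) /\
  (forall e, e \in edges a b c -> edge_mean (fun x => (v x).2) e = 0) /\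
  cell_mean a b c q = 0.

Definition Jcond (a b c n : pt) (d : R) (g : pt)
  (vp vm : P1v) (qp qm : R) : Prop :=
  [/\ dofs_vanish a b c (pw n d (evv vp) (evv vm)) (pw n d (fun=> qp) (fun=> qm)),
      (forall x, Gamma a b c n d x -> evv vp x = evv vm x),
      divv vp = divv vm
    & psub (sigma_n 1 vp qp n) (sigma_n 1 vm qm n) = g].

Definition piCR (a b c : pt) (w : pt -> R) : P1 :=
  xget P1zero [set p : P1 | forall e, e \in edges a b c ->
                              edge_mean (ev1 p) e = edge_mean w e].
Definition pi0 (a b c : pt) (q : pt -> R) : R := cell_mean a b c q.

(* distance to the line containing Gamma {y | n.y = d}, for |n| = 1 *)
Definition dist_line (n : pt) (d : R) (x : pt) : R := `|dot n x - d|.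

Definition zfun (n : pt) (d : R) : pt -> R := pw n d (fun=> -1) (fun=> 0).
Definition wfun (n : pt) (d : R) : pt -> R := pw n d (dist_line n d) (fun=> 0).

End Defs.

From HB Require Import structures.
From mathcomp Require Import all_boot all_order all_algebra.
From mathcomp Require Import all_classical all_reals all_analysis.
From mathcomp Require Import ring lra measurable_realfun.
Import Order.TTheory GRing.Theory Num.Theory numFieldNormedType.Exports.
Local Open Scope classical_set_scope.
Local Open Scope ring_scope.
Set Implicit Arguments. Unset Strict Implicit. Unset Printing Implicit Defensive.

(* On each side of Gamma the fields are affine, so continuity at two points of
   Gamma forces v^+ - v^- = gamma (n.x - d) for a constant vector gamma: the
   velocity gradient jumps by gamma (x) n.  The divergence condition then reads
   gamma.n = 0 and the stress condition gamma - [q] n = g, whence [q] = - g.n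
   and gamma is the tangential part of g.  Thus v^+ = v^- + gamma w on T^+, and
   since the edge mean of an affine function is its value at the edge midpoint,
   the six edge conditions hold iff v^- = - gamma pi^CR w; the cell mean of q
   fixes q^- through pi^0 z.  For g = n we get gamma = 0, for g = t, gamma = t. *)

Local Notation MT R := (measurableTypeR R * measurableTypeR R)%type.

Lemma gt0_perturb (R : realFieldType) (l k s : R) :
  0 < l -> 0 < s -> s <= l / (`|k| + 1) -> 0 < l + k * s.
Proof.
move=> l0 s0; have k1 : 0 < `|k| + 1 by have := normr_ge0 k; lra.
rewrite ler_pdivlMr // => hs.
have /andP[hk _] : - `|k| <= k <= `|k| by rewrite -ler_norml.
nra.
Qed.

Lemma norm_comb3_le (R : realFieldType) (l1 l2 l3 u v w : R) :
  0 <= l1 <= 1 -> 0 <= l2 <= 1 -> 0 <= l3 <= 1 ->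
  `|l1 * u + l2 * v + l3 * w| <= `|u| + `|v| + `|w|.
Proof.
move=> /andP[l10 l11] /andP[l20 l21] /andP[l30 l31].
have le_term l z : 0 <= l -> l <= 1 -> `|l * z| <= `|z|.
  by move=> l_ge0 l_le1; rewrite normrM ger0_norm // ler_piMl.
apply: (le_trans (ler_normD _ _)); apply: lerD; last exact: le_term.
by apply: (le_trans (ler_normD _ _)); apply: lerD; exact: le_term.
Qed.

Section AffineFunctions.
Variable R : realType.
Implicit Types (p r : P1 R) (x : pt R).

Definition ramp (n : pt R) (d : R) : P1 R := (n.1, n.2, - d).

Lemma ev1_ramp n d x : ev1 (ramp n d) x = dot n x - d.
Proof. by rewrite /ev1 /dot. Qed.

Lemma ev1_scale (k : R) p x : ev1 (P1scale k p) x = k * ev1 p x.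
Proof. by rewrite /ev1 /=; ring. Qed.

Lemma ev1_sub p r x : ev1 (P1sub p r) x = ev1 p x - ev1 r x.
Proof. by rewrite /ev1 /=; ring. Qed.

Lemma padd_pscale0l (u v : pt R) : padd u (pscale 0 v) = u.
Proof. by case: u => ? ?; rewrite /padd /pscale /= !mul0r !addr0. Qed.

Lemma padd_pscale0r (u : pt R) (k : R) : padd u (pscale k (0, 0)) = u.
Proof. by case: u => ? ?; rewrite /padd /pscale /= !mulr0 !addr0. Qed.

Definition P1_slope p (v : pt R) : R := p.1.1 * v.1 + p.1.2 * v.2.

Lemma ev1_shift p x (v : pt R) (s : R) :
  ev1 p (padd x (pscale s v)) = ev1 p x + P1_slope p v * s.
Proof. by rewrite /ev1 /P1_slope /=; ring. Qed.

Lemma ev1_translate p x y : ev1 p y = ev1 p x + P1_slope p (psub y x).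
Proof. by rewrite /ev1 /P1_slope /=; ring. Qed.

Lemma norm_P1_slope_le p (v : pt R) (r : R) : `|v.1| <= r -> `|v.2| <= r ->
  `|P1_slope p v| <= (`|p.1.1| + `|p.1.2|) * r.
Proof.
move=> v1 v2; apply: (le_trans (ler_normD _ _)); rewrite mulrDl !normrM.
by apply: lerD; apply: ler_wpM2l.
Qed.

Lemma evv_P1times_vec p (t x : pt R) : evv (P1times_vec p t) x = pscale (ev1 p x) t.
Proof. by rewrite /evv /pscale !ev1_scale !(mulrC t.1, mulrC t.2). Qed.

Lemma P1_eq_at_3points p r (u1 u2 u3 : pt R) : cross (psub u2 u1) (psub u3 u1) != 0 ->
  ev1 p u1 = ev1 r u1 -> ev1 p u2 = ev1 r u2 -> ev1 p u3 = ev1 r u3 -> p = r.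
Proof.
case: p r => [[p1 p2] p3] [[r1 r2] r3] D0; rewrite /ev1 /= => e1 e2 e3.
pose l2 := (p1 - r1) * (u2.1 - u1.1) + (p2 - r2) * (u2.2 - u1.2).
pose l3 := (p1 - r1) * (u3.1 - u1.1) + (p2 - r2) * (u3.2 - u1.2).
have d2 : l2 = 0.
  have -> : l2 = (p1 * u2.1 + p2 * u2.2 + p3) - (r1 * u2.1 + r2 * u2.2 + r3)
                 - ((p1 * u1.1 + p2 * u1.2 + p3) - (r1 * u1.1 + r2 * u1.2 + r3)) by rewrite /l2; ring.
  by rewrite e1 e2 !subrr.
have d3 : l3 = 0.
  have -> : l3 = (p1 * u3.1 + p2 * u3.2 + p3) - (r1 * u3.1 + r2 * u3.2 + r3)
                 - ((p1 * u1.1 + p2 * u1.2 + p3) - (r1 * u1.1 + r2 * u1.2 + r3)) by rewrite /l3; ring.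
  by rewrite e1 e3 !subrr.
have : (p1 - r1) * cross (psub u2 u1) (psub u3 u1) = l2 * (u3.2 - u1.2) - l3 * (u2.2 - u1.2).
  by rewrite /cross /psub /l2 /l3 /=; ring.
have : (p2 - r2) * cross (psub u2 u1) (psub u3 u1) = l3 * (u2.1 - u1.1) - l2 * (u3.1 - u1.1).
  by rewrite /cross /psub /l2 /l3 /=; ring.
rewrite d2 d3 !mul0r subr0.
move=> /eqP; rewrite mulf_eq0 (negbTE D0) orbF subr_eq0 => /eqP E2.
move=> /eqP; rewrite mulf_eq0 (negbTE D0) orbF subr_eq0 => /eqP E1.
by subst r1 r2; congr (_, _, _); lra.
Qed.

Lemma P1_interpolate (u1 u2 u3 : pt R) (w1 w2 w3 : R) :
  cross (psub u2 u1) (psub u3 u1) != 0 ->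
  exists p, [/\ ev1 p u1 = w1, ev1 p u2 = w2 & ev1 p u3 = w3].
Proof.
set D := cross _ _ => D0.
pose g1 := ((w2 - w1) * (u3.2 - u1.2) - (w3 - w1) * (u2.2 - u1.2)) / D.
pose g2 := ((w3 - w1) * (u2.1 - u1.1) - (w2 - w1) * (u3.1 - u1.1)) / D.
exists (g1, g2, w1 - g1 * u1.1 - g2 * u1.2).
by rewrite /ev1 /g1 /g2 /D /cross /psub /= in D0 *; split; field.
Qed.

Lemma P1_ext p r : (forall x, ev1 p x = ev1 r x) -> p = r.
Proof.
move=> e; apply: (@P1_eq_at_3points _ _ (0, 0) (1, 0) (0, 1)); rewrite ?e //.
by rewrite /cross /psub /= !subr0 mulr1 mul0r subr0 oner_neq0.
Qed.

Lemma P1v_ext (v w : P1v R) : (forall x, evv v x = evv w x) -> v = w.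
Proof.
case: v w => [v1 v2] [w1 w2] e; congr (_, _); apply: P1_ext => x;
  by have := e x; rewrite /evv => -[].
Qed.

Definition P1vsub (v w : P1v R) : P1v R := (P1sub v.1 w.1, P1sub v.2 w.2).

Lemma evv_P1vsub (v w : P1v R) x : evv (P1vsub v w) x = psub (evv v x) (evv w x).
Proof. by rewrite /evv !ev1_sub. Qed.

Lemma divv_P1vsub (v w : P1v R) : divv (P1vsub v w) = divv v - divv w.
Proof. by rewrite /divv /dv /=; ring. Qed.

Lemma sigma_n_P1vsub (mu : R) (v w : P1v R) (q q' : R) (m : pt R) :
  psub (sigma_n mu v q m) (sigma_n mu w q' m) = sigma_n mu (P1vsub v w) (q - q') m.
Proof. by rewrite /psub /sigma_n /sigma /eps /dv /=; congr pair; ring. Qed.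

Lemma divv_ramp (n : pt R) (d : R) (ga : pt R) :
  divv (P1times_vec (ramp n d) ga) = dot ga n.
Proof. by rewrite /divv /dv /dot /=. Qed.

Lemma sigma_n_ramp (n : pt R) (d q : R) (ga : pt R) : dot n n = 1 ->
  sigma_n 1 (P1times_vec (ramp n d) ga) q n =
  psub (padd ga (pscale (dot ga n) n)) (pscale q n).
Proof.
rewrite /dot => n1; rewrite /sigma_n /sigma /eps /dv /psub /padd /pscale /=; congr pair.
- transitivity (ga.1 * (n.1 * n.1 + n.2 * n.2) + (ga.1 * n.1 + ga.2 * n.2) * n.1 - q * n.1).
    by field.
  by rewrite n1 mulr1.
- transitivity (ga.2 * (n.1 * n.1 + n.2 * n.2) + (ga.1 * n.1 + ga.2 * n.2) * n.2 - q * n.2).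
    by field.
  by rewrite n1 mulr1.
Qed.

Lemma P1_vanish_on_line p (n p0 : pt R) (d s : R) :
  dot n n = 1 -> dot n p0 = d -> s != 0 ->
  ev1 p p0 = 0 -> ev1 p (padd p0 (pscale s (rot_m90 n))) = 0 ->
  p = P1scale (P1_slope p n) (ramp n d).
Proof.
move=> n1 np0 s0 e0 e1.
apply: (@P1_eq_at_3points _ _ p0 (padd p0 (pscale s (rot_m90 n))) (padd p0 (pscale 1 n))).
- suff -> : cross (psub (padd p0 (pscale s (rot_m90 n))) p0) (psub (padd p0 (pscale 1 n)) p0) = s
    by [].
  transitivity (s * dot n n); last by rewrite n1 mulr1.
  by rewrite /cross /dot /psub /padd /pscale /rot_m90 /=; ring.
- by rewrite e0 ev1_scale ev1_ramp np0 subrr mulr0.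
- by rewrite e1 ev1_scale ev1_ramp -np0 /dot /padd /pscale /rot_m90 /=; ring.
- rewrite ev1_shift e0 add0r ev1_scale ev1_ramp.
  have -> : dot n (padd p0 (pscale 1 n)) = dot n p0 + dot n n by rewrite /dot /=; ring.
  by rewrite np0 n1 addrC addKr mulr1.
Qed.

End AffineFunctions.

Section PlaneMeasure.
Variable R : realType.

Lemma measurable_ev1 (p : P1 R) : measurable_fun (setT : set (MT R)) (ev1 p).
Proof.
apply: measurable_funD; last exact: measurable_cst.
by apply: measurable_funD; apply: measurable_funM;
  [exact: measurable_cst | exact: measurable_fst | exact: measurable_cst | exact: measurable_snd].
Qed.

Definition square (x : pt R) (r : R) : set (pt R) :=
  `[x.1 - r, x.1 + r] `*` `[x.2 - r, x.2 + r].

Lemma measurable_square x r : measurable (square x r : set (MT R)).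
Proof. by apply: measurableX; exact: measurable_itv. Qed.

Lemma leb2_square x r : 0 < r -> leb2 (square x r) = ((r *+ 2) * (r *+ 2))%:E.
Proof.
move=> r0; rewrite /leb2 product_measure1E; try exact: measurable_itv.
change (lebesgue_measure `[(x.1 - r)%R, (x.1 + r)%R]%classic *
        lebesgue_measure `[(x.2 - r)%R, (x.2 + r)%R]%classic =
        ((r *+ 2) * (r *+ 2))%:E)%E.
rewrite !lebesgue_measure_itv /= !lte_fin !ltrD2l !gtrN // -EFinM.
by congr (_%:E); rewrite !mulr2n; ring.
Qed.

End PlaneMeasure.

Section EdgeMeans.
Variable R : realType.
Local Notation mu := (@lebesgue_measure R).

Lemma integrable01_continuous (f : R -> R) :
  continuous f -> mu.-integrable `[0%R, 1%R] (EFin \o f).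
Proof.
move=> cf; apply: continuous_compact_integrable; first exact: segment_compact.
exact: continuous_subspaceT.
Qed.

Lemma continuous_affine (A B : R) : continuous (fun t : R => A + B * t).
Proof. by move=> t; apply: cvgD; [exact: cvg_cst | apply: cvgM; [exact: cvg_cst | exact: cvg_id]]. Qed.

Lemma lebesgue_measure01 : mu `[0%R, 1%R]%classic = 1%E.
Proof. by rewrite lebesgue_measure_itv /= lte_fin ltr01 oppr0 adde0. Qed.

Lemma Rintegral01_cst (A : R) : \int[mu]_(t in `[0%R, 1%R]) A = A.
Proof.
rewrite Rintegral_cst //.
have -> : fine (mu `[0%R, 1%R]%classic) = 1 by rewrite lebesgue_measure01.
by rewrite mulr1.
Qed.

Lemma Rintegral01_id : \int[mu]_(t in `[0%R, 1%R]) t = 1 / 2.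
Proof.
have cid : continuous (@id R) by move=> x; exact: cvg_id.
have : \int[mu]_(t in `[0%R, 1%R]) t = \int[mu]_(t in `[0%R, 1%R]) (1 - t).
  have r01 : 0 <= (1 : R) <= 1 by rewrite ler01 lexx.
  have sym := @Rintegration_by_substitution_onem R id 1 r01 (continuous_subspaceT cid).
  have : \int[mu]_(t in `[0%R, 1%R]) t = \int[mu]_(t in `[1 - 1, 1%R]) (1 - t) := sym.
  by rewrite subrr.
rewrite RintegralB ?Rintegral01_cst //.
- by move=> h; lra.
- by apply: integrable01_continuous => x; exact: cvg_cst.
- exact: integrable01_continuous.
Qed.

Lemma Rintegral01_affine (A B : R) : \int[mu]_(t in `[0%R, 1%R]) (A + B * t) = A + B / 2.
Proof.
have cid : continuous (@id R) by move=> x; exact: cvg_id.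
rewrite RintegralD //; last 2 first.
- by apply: integrable01_continuous => x; exact: cvg_cst.
- by apply: integrable01_continuous => x; apply: continuousM; [exact: cvg_cst | exact: cvg_id].
rewrite RintegralZl ?Rintegral01_id ?Rintegral01_cst //; last exact: integrable01_continuous.
lra.
Qed.

Definition midpoint (e : pt R * pt R) : pt R :=
  ((e.1.1 + e.2.1) / 2, (e.1.2 + e.2.2) / 2).

Lemma edge_mean_ev1 (p : P1 R) e : edge_mean (ev1 p) e = ev1 p (midpoint e).
Proof.
rewrite /edge_mean (eq_fun (fun t => ev1_shift p e.1 _ t)) Rintegral01_affine.
by rewrite /ev1 /midpoint /P1_slope /=; field.
Qed.

Lemma wfun_plus (n : pt R) d x : d < dot n x -> wfun n d x = dot n x - d.
Proof. by move=> hx; rewrite /wfun /pw /dist_line hx ger0_norm // subr_ge0 ltW. Qed.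

Lemma wfun_le (n : pt R) d x : dot n x <= d -> wfun n d x = 0.
Proof. by move=> hx; rewrite /wfun /pw ltNge hx. Qed.

Lemma wfun_on_segment (n : pt R) d (e : pt R * pt R) (t : R) :
  wfun n d (padd e.1 (pscale t (psub e.2 e.1))) =
  Num.max ((dot n e.1 - d) + dot n (psub e.2 e.1) * t) 0.
Proof.
set y := padd _ _.
have -> : dot n e.1 - d + dot n (psub e.2 e.1) * t = dot n y - d.
  by rewrite /y /dot /padd /pscale /psub /=; ring.
case: (ltrP d (dot n y)) => hy; first by rewrite wfun_plus // max_l // subr_ge0 ltW.
by rewrite wfun_le // max_r // subr_le0.
Qed.

Lemma edge_mean_ev1_wfun (p : P1 R) (k : R) (n : pt R) d e :
  edge_mean (fun x => ev1 p x + wfun n d x * k) e =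
  ev1 p (midpoint e) + edge_mean (wfun n d) e * k.
Proof.
have iw : mu.-integrable `[0%R, 1%R] (EFin \o (fun t => wfun n d (padd e.1 (pscale t (psub e.2 e.1))))).
  rewrite (eq_fun (wfun_on_segment n d e)); apply: integrable01_continuous => t.
  apply: (@continuous_max _ _ (fun t => dot n e.1 - d + dot n (psub e.2 e.1) * t) (fun=> 0)).
    exact: continuous_affine.
  exact: cvg_cst.
rewrite -edge_mean_ev1 /edge_mean RintegralD //; last first.
  rewrite (_ : EFin \o _ = (fun t => (EFin \o (fun t => wfun n d (padd e.1 (pscale t (psub e.2 e.1))))) t * k%:E)%E).
    exact: integrableZr.
  by apply/funext => t; rewrite /= EFinM.
- by rewrite (eq_fun (fun t => ev1_shift p e.1 _ t)); exact/integrable01_continuous/continuous_affine.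
- by rewrite RintegralZr.
Qed.

End EdgeMeans.

Section Triangle.
Variables (R : realType) (a b c : pt R).
Hypothesis nondeg : cross (psub b a) (psub c a) != 0.
Local Notation D := (cross (psub b a) (psub c a)).
Implicit Types (x y v : pt R).

(* [cross_form u o] is the affine function [x |-> cross (x - o) u]. *)
Definition cross_form (u o : pt R) : P1 R := (u.2, - u.1, cross u o).

Definition bary1 : P1 R := P1scale D^-1 (cross_form (psub b c) b).
Definition bary2 : P1 R := P1scale D^-1 (cross_form (psub c a) a).
Definition bary3 : P1 R := P1scale (- D^-1) (cross_form (psub b a) a).

Lemma bary_comb3 (l1 l2 l3 : R) : l1 + l2 + l3 = 1 ->
  [/\ ev1 bary1 (comb3 a b c l1 l2 l3) = l1,
      ev1 bary2 (comb3 a b c l1 l2 l3) = l2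
    & ev1 bary3 (comb3 a b c l1 l2 l3) = l3].
Proof.
move=> hs; have -> : l1 = 1 - l2 - l3 by lra.
move: nondeg; rewrite /bary1 /bary2 /bary3 /cross_form /ev1 /comb3 /cross /psub /= => D0.
by split; field.
Qed.

Lemma comb3_bary x : x = comb3 a b c (ev1 bary1 x) (ev1 bary2 x) (ev1 bary3 x).
Proof.
move: nondeg; rewrite /bary1 /bary2 /bary3 /cross_form /ev1 /comb3 /cross /psub /= => D0.
by case: x => x1 x2 /=; congr pair; field.
Qed.

Lemma bary_sum x : ev1 bary1 x + ev1 bary2 x + ev1 bary3 x = 1.
Proof.
move: nondeg; rewrite /bary1 /bary2 /bary3 /cross_form /ev1 /cross /psub /= => D0.
by field.
Qed.

Lemma tri_setE (P : R -> Prop) :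
  [set x | exists l1 l2 l3, [/\ P l1, P l2, P l3, l1 + l2 + l3 = 1
                                & x = comb3 a b c l1 l2 l3]] =
  [set x | [/\ P (ev1 bary1 x), P (ev1 bary2 x) & P (ev1 bary3 x)]].
Proof.
apply/seteqP; split => x /=.
  by case=> l1 [l2 [l3 [h1 h2 h3 hs ->]]]; have [-> -> ->] := bary_comb3 hs.
case=> h1 h2 h3; exists (ev1 bary1 x), (ev1 bary2 x), (ev1 bary3 x).
by split => //; [exact: bary_sum | exact: comb3_bary].
Qed.

Lemma tri_closedE : tri_closed a b c =
  [set x | [/\ 0 <= ev1 bary1 x, 0 <= ev1 bary2 x & 0 <= ev1 bary3 x]].
Proof. exact: (tri_setE (fun l => 0 <= l)). Qed.

Lemma tri_openE : tri_open a b c =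
  [set x | [/\ 0 < ev1 bary1 x, 0 < ev1 bary2 x & 0 < ev1 bary3 x]].
Proof. exact: (tri_setE (fun l => 0 < l)). Qed.

Lemma tri_open_segment x y (s : R) : tri_open a b c x -> tri_open a b c y ->
  0 < s < 1 -> tri_open a b c (padd x (pscale s (psub y x))).
Proof.
rewrite tri_openE /= => -[x1 x2 x3] [y1 y2 y3] /andP[s0 s1].
have along p : ev1 p (padd x (pscale s (psub y x))) = (1 - s) * ev1 p x + s * ev1 p y.
  by rewrite /ev1 /=; ring.
by rewrite !along; split; nra.
Qed.

Lemma tri_open_perturb x v (l k : R) : tri_open a b c x -> 0 < l ->
  exists s, [/\ 0 < s, tri_open a b c (padd x (pscale s v)) & 0 < l + k * s].
Proof.
rewrite tri_openE /= => -[h1 h2 h3] l0.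
pose ratio p := ev1 p x / (`|P1_slope p v| + 1).
pose s := Num.min (Num.min (ratio bary1) (ratio bary2)) (Num.min (ratio bary3) (l / (`|k| + 1))).
have ratio_gt0 (m q : R) : 0 < m -> 0 < m / (`|q| + 1).
  by move=> m0; apply: divr_gt0 => //; have := normr_ge0 q; lra.
have s0 : 0 < s by rewrite !lt_min !ratio_gt0.
have := lexx s; rewrite {2}/s !le_min => /andP[/andP[s1 s2] /andP[s3 sl]].
exists s; split => //; last exact: gt0_perturb.
by split; rewrite ev1_shift; exact: gt0_perturb.
Qed.

Lemma P1_eq_on_open_piece (h p r : P1 R) :
  (exists x, tri_open a b c x /\ 0 < ev1 h x) ->
  (forall y, tri_open a b c y -> 0 < ev1 h y -> ev1 p y = ev1 r y) -> p = r.
Proof.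
move=> [x [hx lx]] eq_pr.
have [s1 [s10 hy1 ly1]] := tri_open_perturb (1, 0) (P1_slope h (1, 0)) hx lx.
have [s2 [s20 hy2 ly2]] := tri_open_perturb (0, 1) (P1_slope h (0, 1)) hx lx.
apply: (@P1_eq_at_3points _ _ _ x (padd x (pscale s1 (1, 0))) (padd x (pscale s2 (0, 1)))).
- by rewrite /cross /psub /padd /pscale /=; apply: lt0r_neq0; nra.
- exact: eq_pr.
- by apply: eq_pr; rewrite ?ev1_shift.
- by apply: eq_pr; rewrite ?ev1_shift.
Qed.

Lemma P1v_eq_on_open_piece (h : P1 R) (v w : P1v R) :
  (exists x, tri_open a b c x /\ 0 < ev1 h x) ->
  (forall y, tri_open a b c y -> 0 < ev1 h y -> evv v y = evv w y) -> v = w.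
Proof.
case: v w => [v1 v2] [w1 w2] hx e; congr (_, _); apply: (P1_eq_on_open_piece hx) => y Ty hy;
  by have := e y Ty hy; rewrite /evv => -[].
Qed.

Lemma measurable_tri_closed : measurable (tri_closed a b c : set (MT R)).
Proof.
have ge0 p : measurable [set x : MT R | 0 <= ev1 p x].
  have := measurable_ev1 p measurableT (measurable_itv `[0%R, +oo[).
  by rewrite setTI; congr measurable; apply/seteqP; split => x /=; rewrite in_itv /= andbT.
rewrite tri_closedE.
have -> : [set x | [/\ 0 <= ev1 bary1 x, 0 <= ev1 bary2 x
                     & 0 <= ev1 bary3 x]] =
  [set x : MT R | 0 <= ev1 bary1 x] `&` [set x : MT R | 0 <= ev1 bary2 x]
  `&` [set x : MT R | 0 <= ev1 bary3 x].
  by apply/seteqP; split => x /=; [case=> * | case=> [[]] *].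
by apply: measurableI; [apply: measurableI|]; exact: ge0.
Qed.

Lemma tri_closed_sub_square : exists M, 0 < M /\ tri_closed a b c `<=` square (0, 0) M.
Proof.
pose M := `|a.1| + `|b.1| + `|c.1| + `|a.2| + `|b.2| + `|c.2| + 1.
exists M; split; first by rewrite ltr_pwDr // !addr_ge0.
move=> x [l1 [l2 [l3 [h1 h2 h3 hs ->]]]].
have i1 : 0 <= l1 <= 1 by apply/andP; split; lra.
have i2 : 0 <= l2 <= 1 by apply/andP; split; lra.
have i3 : 0 <= l3 <= 1 by apply/andP; split; lra.
have n1 := norm_comb3_le a.1 b.1 c.1 i1 i2 i3.
have n2 := norm_comb3_le a.2 b.2 c.2 i1 i2 i3.
have := normr_ge0 a.1; have := normr_ge0 b.1; have := normr_ge0 c.1.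
have := normr_ge0 a.2; have := normr_ge0 b.2; have := normr_ge0 c.2.
rewrite /square /comb3 /= !in_itv /= !sub0r !add0r -!ler_norml /M => *.
by split; lra.
Qed.

Lemma square_sub_tri_closed : exists g r, 0 < r /\ square g r `<=` tri_closed a b c.
Proof.
pose g := comb3 a b c (1/3) (1/3) (1/3).
have [g1 g2 g3] : [/\ ev1 bary1 g = 1/3, ev1 bary2 g = 1/3
                     & ev1 bary3 g = 1/3].
  by apply: bary_comb3 => //; field.
pose size (p : P1 R) := `|p.1.1| + `|p.1.2|.
pose K := size bary1 + size bary2 + size bary3 + 1.
have size_ge0 p : 0 <= size p by rewrite addr_ge0.
have K_gt0 : 0 < K by rewrite /K; have := size_ge0 bary1;
  have := size_ge0 bary2; have := size_ge0 bary3; lra.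
(* On this square each barycentric coordinate is within 1/3 of its value 1/3. *)
exists g, (1 / (3 * K)); split; first by rewrite divr_gt0 ?mulr_gt0.
move=> x [/= x1 x2]; rewrite tri_closedE /=.
have [v1 v2] : `|(psub x g).1| <= 1 / (3 * K) /\ `|(psub x g).2| <= 1 / (3 * K).
  by move: x1 x2; rewrite !in_itv /= -!ler_distlC !(distrC x.1) !(distrC x.2).
have near_third p : ev1 p g = 1/3 -> size p <= K -> 0 <= ev1 p x.
  move=> pg pK; rewrite (ev1_translate p g) pg.
  have := norm_P1_slope_le p v1 v2; rewrite ler_norml => /andP[lo _].
  have : size p * (1 / (3 * K)) <= 1/3.
    have -> : 1/3 = K * (1 / (3 * K)) by field; exact: lt0r_neq0.
    by rewrite ler_pM2r ?divr_gt0 ?mulr_gt0.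
  rewrite -/(size p) in lo; lra.
by split; apply: near_third; rewrite /K; have := size_ge0 bary1;
  have := size_ge0 bary2; have := size_ge0 bary3; lra.
Qed.

Lemma leb2_tri_closed_fin_num : leb2 (tri_closed a b c) \is a fin_num.
Proof.
have [M [M_gt0 sub]] := tri_closed_sub_square.
rewrite ge0_fin_numE ?measure_ge0 //.
apply: (@le_lt_trans _ _ (leb2 (square (0, 0) M))); last by rewrite leb2_square ?ltry.
by apply: le_measure; rewrite ?inE //; [exact: measurable_tri_closed | exact: measurable_square].
Qed.

Lemma leb2_tri_closedE : leb2 (tri_closed a b c) = (area a b c)%:E.
Proof. by rewrite /area fineK // leb2_tri_closed_fin_num. Qed.

Lemma area_gt0 : 0 < area a b c.
Proof.
have [g [r [r0 sub]]] := square_sub_tri_closed.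
have : (leb2 (square g r) <= leb2 (tri_closed a b c))%E.
  apply: le_measure; rewrite ?inE //; [exact: measurable_square | exact: measurable_tri_closed].
rewrite leb2_tri_closedE leb2_square // lee_fin; apply: lt_le_trans.
by rewrite mulr_gt0 // mulrn_wgt0.
Qed.

Lemma integrable_pw_cst (n : pt R) (d p m : R) :
  (@leb2 R).-integrable (tri_closed a b c) (EFin \o pw n d (fun=> p) (fun=> m)).
Proof.
apply: measurable_bounded_integrable.
- exact: measurable_tri_closed.
- by change (leb2 (tri_closed a b c) < +oo)%E; rewrite leb2_tri_closedE ltry.
- apply: measurable_funS (subsetT _) _; first exact: measurableT.
  apply: measurable_fun_ifT; try exact: measurable_cst.
  apply: measurable_fun_ltr; first exact: measurable_cst.
  have -> : dot n = ev1 (n.1, n.2, 0) by apply/funext => x; rewrite /ev1 /dot addr0.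
  exact: measurable_ev1.
- exists (`|p| + `|m|); split; rewrite ?num_real // => M hM x _ /=.
  by rewrite /pw; have := normr_ge0 p; have := normr_ge0 m; case: ifP => _ *; lra.
Qed.

Lemma cell_mean_pw_cst (n : pt R) (d qp qm : R) :
  cell_mean a b c (pw n d (fun=> qp) (fun=> qm)) = qm + (qm - qp) * pi0 a b c (zfun n d).
Proof.
have mT := measurable_tri_closed.
have -> : pw n d (fun=> qp) (fun=> qm) = fun x => qm + (qm - qp) * zfun n d x.
  by apply/funext => x; rewrite /zfun /pw; case: ifP => _; ring.
rewrite /pi0 /cell_mean RintegralD //; last 2 first.
- apply: (eq_integrable mT _ _ _ (integrable_pw_cst n d qm qm)).
  by move=> x _; rewrite /pw /=; case: ifP.
- apply: (eq_integrable mT _ _ _ (integrable_pw_cst n d ((qm - qp) * -1) ((qm - qp) * 0))).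
  by move=> x _; rewrite /zfun /pw /=; case: ifP.
rewrite RintegralZl ?Rintegral_cst //; last exact: integrable_pw_cst.
rewrite -/(area a b c); field.
exact: lt0r_neq0 area_gt0.
Qed.

Lemma forall_edges (P : pt R * pt R -> Prop) :
  (forall e, e \in edges a b c -> P e) <-> [/\ P (b, c), P (c, a) & P (a, b)].
Proof.
split; first by move=> h; split; apply: h; rewrite /edges !inE eqxx ?orbT.
by case=> h1 h2 h3 e; rewrite /edges !inE => /or3P[] /eqP->.
Qed.

Lemma midpoints_nondeg :
  cross (psub (midpoint (c, a)) (midpoint (b, c))) (psub (midpoint (a, b)) (midpoint (b, c))) != 0.
Proof.
suff -> : cross (psub (midpoint (c, a)) (midpoint (b, c))) (psub (midpoint (a, b)) (midpoint (b, c)))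
          = D / 4.
  by rewrite mulf_neq0 // invr_eq0 pnatr_eq0.
by rewrite /cross /psub /midpoint /=; field.
Qed.

Lemma piCR_midpoints (w : pt R -> R) :
  [/\ ev1 (piCR a b c w) (midpoint (b, c)) = edge_mean w (b, c),
      ev1 (piCR a b c w) (midpoint (c, a)) = edge_mean w (c, a)
    & ev1 (piCR a b c w) (midpoint (a, b)) = edge_mean w (a, b)].
Proof.
have [p [h1 h2 h3]] := P1_interpolate (edge_mean w (b, c)) (edge_mean w (c, a))
                                      (edge_mean w (a, b)) midpoints_nondeg.
have /forall_edges[] : [set p : P1 R | forall e, e \in edges a b c ->
                          edge_mean (ev1 p) e = edge_mean w e] (piCR a b c w).
  by apply: (@xgetI _ _ _ p) => /=; apply/forall_edges; rewrite !edge_mean_ev1.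
by rewrite !edge_mean_ev1.
Qed.

Lemma edge_means_vanish_iff (n : pt R) (d : R) (r : P1 R) (k : R) :
  (forall e, e \in edges a b c -> edge_mean (fun x => ev1 r x + wfun n d x * k) e = 0) <->
  r = P1scale (- k) (piCR a b c (wfun n d)).
Proof.
have [w1 w2 w3] := piCR_midpoints (wfun n d).
rewrite forall_edges !edge_mean_ev1_wfun -w1 -w2 -w3; split.
- by case=> h1 h2 h3; apply: (P1_eq_at_3points midpoints_nondeg); rewrite ev1_scale; lra.
- by move=> ->; rewrite !ev1_scale; split; ring.
Qed.

Lemma Gamma_two_points (n : pt R) (d : R) :
  (exists x, Tplus a b c n d x) -> (exists x, Tminus a b c n d x) ->
  exists p0 s, [/\ Gamma a b c n d p0, 0 < s & Gamma a b c n d (padd p0 (pscale s (rot_m90 n)))].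
Proof.
move=> [xp [hp1 hp2]] [xm [hm1 hm2]].
pose l := (dot n xp - d) / (dot n xp - dot n xm).
have l01 : 0 < l < 1.
  rewrite /l; apply/andP; split; first by apply: divr_gt0; lra.
  by rewrite ltr_pdivrMr; lra.
pose p0 := padd xp (pscale l (psub xm xp)).
have hp0 : tri_open a b c p0 by exact: tri_open_segment.
have dp0 : dot n p0 = d.
  by rewrite /p0 /l /dot /padd /pscale /psub /=; rewrite /dot in hp2 hm2 *; field; lra.
have [s [s0 hs _]] := tri_open_perturb (rot_m90 n) 0 hp0 ltr01.
exists p0, s; split => //; split => //.
by rewrite -dp0 /dot /padd /pscale /rot_m90 /=; ring.
Qed.

End Triangle.

Section Interface.
Variables (R : realType) (a b c n : pt R) (d : R).
Hypothesis nondeg : cross (psub b a) (psub c a) != 0.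
Hypothesis n_unit : dot n n = 1.
Hypothesis Tp_ne : exists x, Tplus a b c n d x.
Hypothesis Tm_ne : exists x, Tminus a b c n d x.

Definition tangential (g : pt R) : pt R := psub g (pscale (dot g n) n).

Definition ramp_jump (vp vm : P1v R) (ga : pt R) : Prop :=
  forall x, evv vp x = padd (evv vm x) (pscale (dot n x - d) ga).

Lemma dot_tangential g : dot (tangential g) n = 0.
Proof.
move: n_unit; rewrite /tangential /dot /psub /pscale /= => n1.
transitivity ((g.1 * n.1 + g.2 * n.2) * (1 - (n.1 * n.1 + n.2 * n.2))); first by ring.
by rewrite n1 subrr mulr0.
Qed.

Lemma ramp_jumpE vp vm ga :
  ramp_jump vp vm ga <-> P1vsub vp vm = P1times_vec (ramp n d) ga.
Proof.
split => [J | E x].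
- congr (_, _); apply: P1_ext => x; rewrite ev1_sub ev1_scale ev1_ramp;
    by move: (J x); rewrite /evv /padd /pscale => -[e1 e2]; rewrite ?e1 ?e2 /=; ring.
- have := f_equal (fun v => evv v x) E; rewrite evv_P1vsub evv_P1times_vec ev1_ramp.
  case: (evv vp x) => ? ?; rewrite /psub /padd /pscale /= => -[<- <-].
  by congr pair; ring.
Qed.

Lemma sigma_n_ramp_tangentialP ga q g : dot ga n = 0 ->
  sigma_n 1 (P1times_vec (ramp n d) ga) q n = g <-> ga = tangential g /\ q = - dot g n.
Proof.
move=> ga_n; rewrite sigma_n_ramp // ga_n.
rewrite padd_pscale0l.
have dot_g : dot (psub ga (pscale q n)) n = - q.
  transitivity (dot ga n - q * dot n n); first by rewrite /dot /=; ring.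
  by rewrite ga_n n_unit; ring.
split => [<- | [-> ->]].
- split; last by rewrite dot_g opprK.
  by rewrite /tangential dot_g; case: (ga) => ? ?; rewrite /psub /pscale /=; congr pair; ring.
- by rewrite /tangential; case: g => ? ?; rewrite /psub /pscale /dot /=; congr pair; ring.
Qed.

Lemma interface_conditionsP g vp vm qp qm :
  [/\ (forall x, Gamma a b c n d x -> evv vp x = evv vm x), divv vp = divv vm
    & psub (sigma_n 1 vp qp n) (sigma_n 1 vm qm n) = g] <->
  ramp_jump vp vm (tangential g) /\ qp - qm = - dot g n.
Proof.
rewrite sigma_n_P1vsub; split.
- case=> cont /eqP; rewrite -subr_eq0 -divv_P1vsub => /eqP div jump.
  have [p0 [s [G0 s0 Gs]]] := Gamma_two_points nondeg Tp_ne Tm_ne.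
  have np0 : dot n p0 = d by case: G0.
  set dl := P1vsub vp vm in div jump *.
  have vanish x : Gamma a b c n d x -> ev1 dl.1 x = 0 /\ ev1 dl.2 x = 0.
    by move=> /cont; rewrite /evv !ev1_sub => -[-> ->]; rewrite !subrr.
  pose ga := (P1_slope dl.1 n, P1_slope dl.2 n).
  have dlE : dl = P1times_vec (ramp n d) ga.
    have [[e1 e2] [f1 f2]] := (vanish _ G0, vanish _ Gs).
    have on_line := P1_vanish_on_line n_unit np0 (lt0r_neq0 s0).
    by congr (_, _); [exact: on_line e1 f1 | exact: on_line e2 f2].
  move: div jump; rewrite dlE divv_ramp => ga_n /(sigma_n_ramp_tangentialP _ _ ga_n)[gaE ->].
  by split => //; apply/ramp_jumpE; rewrite -gaE.
- case=> J qE; have dlE := (ramp_jumpE vp vm _).1 J; rewrite dlE; split.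
  + by move=> x [_ dx]; rewrite J dx subrr padd_pscale0l.
  + by apply/eqP; rewrite -subr_eq0 -divv_P1vsub dlE divv_ramp dot_tangential.
  + exact/(sigma_n_ramp_tangentialP _ _ (dot_tangential g)).
Qed.

Local Notation CR := (piCR a b c (wfun n d)).
Local Notation pz := (pi0 a b c (zfun n d)).

Lemma pw_ramp_jump vp vm ga : ramp_jump vp vm ga ->
  pw n d (evv vp) (evv vm) = fun x => padd (evv vm x) (pscale (wfun n d x) ga).
Proof.
move=> J; apply/funext => x; rewrite {1}/pw.
case: ifP => hx; first by rewrite J wfun_plus.
by rewrite wfun_le ?padd_pscale0l // leNgt hx.
Qed.

Lemma dofs_vanish_iff vp vm qp qm ga : ramp_jump vp vm ga ->
  dofs_vanish a b c (pw n d (evv vp) (evv vm)) (pw n d (fun=> qp) (fun=> qm)) <->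
  vm = P1times_vec CR (- ga.1, - ga.2) /\ qm + (qm - qp) * pz = 0.
Proof.
move=> /pw_ramp_jump ->; rewrite /dofs_vanish cell_mean_pw_cst //= !(edge_means_vanish_iff nondeg).
case: vm => vm1 vm2 /=; split => [[-> [-> ->]] | [[-> ->] ->]] //.
Qed.

Lemma Jcond_iff g vp vm qp qm :
  Jcond a b c n d g vp vm qp qm <->
  [/\ ramp_jump vp vm (tangential g),
      vm = P1times_vec CR (- (tangential g).1, - (tangential g).2),
      qp - qm = - dot g n
    & qm + (qm - qp) * pz = 0].
Proof.
split.
- case=> dofs cont div jump.
  have [J qE] := (interface_conditionsP g vp vm qp qm).1 (And3 cont div jump).
  by have [vmE cellE] := (dofs_vanish_iff qp qm J).1 dofs.
- case=> J vmE qE cellE.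
  have [cont div jump] := (interface_conditionsP g vp vm qp qm).2 (conj J qE).
  by split => //; apply/(dofs_vanish_iff qp qm J).
Qed.

Lemma ramp_jump0 vp vm : ramp_jump vp vm (0, 0) <-> vp = vm.
Proof.
split => [J | -> x]; last by rewrite padd_pscale0r.
by apply: P1v_ext => x; rewrite J padd_pscale0r.
Qed.

Lemma Jcond_normal_iff vp vm qp qm :
  Jcond a b c n d n vp vm qp qm <->
  [/\ vp = P1vzero R, vm = P1vzero R, qp = -1 - pz & qm = 0 - pz].
Proof.
have tn : tangential n = (0, 0) by rewrite /tangential n_unit /psub /pscale /= !mul1r !subrr.
have CR0 : P1times_vec CR (- 0, - 0) = P1vzero R by rewrite /P1times_vec /P1scale /= oppr0 !mul0r.
rewrite Jcond_iff tn CR0 n_unit; split => [[/ramp_jump0 -> -> dq cell] | [-> -> -> ->]].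
- have dq' : qm - qp = 1 by lra.
  by rewrite dq' mul1r in cell; split => //; lra.
- by split; [exact/ramp_jump0 | by [] | ring | ring].
Qed.

Lemma Jcond_tangential_iff vp vm qp qm :
  Jcond a b c n d (rot_m90 n) vp vm qp qm <->
  [/\ (forall x, Tplus a b c n d x ->
         evv vp x = pscale (wfun n d x - ev1 CR x) (rot_m90 n)),
      (forall x, Tminus a b c n d x ->
         evv vm x = pscale (wfun n d x - ev1 CR x) (rot_m90 n)),
      qp = 0
    & qm = 0].
Proof.
set t := rot_m90 n.
have tn : dot t n = 0 by rewrite /dot /t /rot_m90 /=; ring.
have tt : tangential t = t by rewrite /tangential tn /psub /pscale /= !mul0r !subr0.
rewrite Jcond_iff tt tn oppr0.
have vm_spec (x : pt R) : wfun n d x = 0 ->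
    evv (P1times_vec CR (- t.1, - t.2)) x = pscale (wfun n d x - ev1 CR x) t.
  by move=> ->; rewrite evv_P1times_vec /pscale /=; congr pair; ring.
have vp_spec (x : pt R) : wfun n d x = dot n x - d ->
    evv (P1times_vec (P1sub (ramp n d) CR) t) x = pscale (wfun n d x - ev1 CR x) t.
  by move=> ->; rewrite evv_P1times_vec ev1_sub ev1_ramp.
split => [[J vmE dq cell] | [hp hm -> ->]].
- have qm0 : qm = 0 by move: cell; rewrite (_ : qm - qp = 0) ?mul0r ?addr0 //; lra.
  split => //; last by lra.
  + move=> x [_ hx]; rewrite J vmE evv_P1times_vec wfun_plus //.
    by rewrite /padd /pscale /=; congr pair; ring.
  + by move=> x [_ hx]; rewrite vmE vm_spec // wfun_le // ltW.
- have vmE : vm = P1times_vec CR (- t.1, - t.2).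
    apply: (P1v_eq_on_open_piece nondeg (h := P1scale (-1) (ramp n d))).
      by have [x [Tx hx]] := Tm_ne; exists x; rewrite ev1_scale ev1_ramp; split => //; lra.
    move=> y Ty; rewrite ev1_scale ev1_ramp => hy.
    have y_minus : dot n y < d by lra.
    by rewrite vm_spec; [apply: hm | exact/wfun_le/ltW].
  have vpE : vp = P1times_vec (P1sub (ramp n d) CR) t.
    apply: (P1v_eq_on_open_piece nondeg (h := ramp n d)).
      by have [x [Tx hx]] := Tp_ne; exists x; rewrite ev1_ramp subr_gt0.
    move=> y Ty; rewrite ev1_ramp subr_gt0 => hy.
    by rewrite vp_spec; [apply: hp | exact: wfun_plus].
  split => //; rewrite ?subrr ?mul0r ?addr0 // => x.
  rewrite vpE vmE !evv_P1times_vec ev1_sub ev1_ramp.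
  by rewrite /padd /pscale /=; congr pair; ring.
Qed.

End Interface.

Theorem lemma4p2 (R : realType) (a b c n : pt R) (d : R)
  (nondeg : cross (psub b a) (psub c a) != 0)
  (n_unit : dot n n = 1)
  (Tp_ne : exists x, Tplus a b c n d x)
  (Tm_ne : exists x, Tminus a b c n d x) :
  (forall (vp vm : P1v R) (qp qm : R),
     Jcond a b c n d n vp vm qp qm <->
     [/\ vp = P1vzero R, vm = P1vzero R,
         qp = -1 - pi0 a b c (zfun n d)
       & qm = 0 - pi0 a b c (zfun n d)]) /\
  (forall (vp vm : P1v R) (qp qm : R),
     Jcond a b c n d (rot_m90 n) vp vm qp qm <->
     [/\ (forall x, Tplus a b c n d x ->
            evv vp x = pscale (wfun n d x - ev1 (piCR a b c (wfun n d)) x) (rot_m90 n)),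
         (forall x, Tminus a b c n d x ->
            evv vm x = pscale (wfun n d x - ev1 (piCR a b c (wfun n d)) x) (rot_m90 n)),
         qp = 0
       & qm = 0]).
Proof.
split.
- exact: Jcond_normal_iff nondeg n_unit Tp_ne Tm_ne.
- exact: Jcond_tangential_iff nondeg n_unit Tp_ne Tm_ne.
Qed.
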